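(* Let $n \geq 2$, let $A \in \mathbb{R}^{n\times n}$ be symmetric, $b \in \mathbb{R}^n$, $c \in \mathbb{R}$, and let $C = \begin{pmatrix} A & b \\ b^\top & c \end{pmatrix}$. For $p \geq 2$, consider the problem \[ \min_{Y_1 \in \mathbb{R}^{n\times p},\, y_2 \in \mathbb{R}^p} \langle CY, Y\rangle \quad \text{subject to} \quad \|Y_1\|^2 = 1,\ \|y_2\|^2 = 1, \qquad \text{with } Y = \begin{pmatrix} Y_1 \\ y_2^\top \end{pmatrix} \in \mathbb{R}^{(n+1)\times p}. \] Then every second-order critical point of this problem is globally optimal (for all $A, b, c$).
   Context: This problem is the Burer--Monteiro factorization at rank $p$ of the SDP relaxation of the trust-region subproblem $\min_{x\in\mathbb{R}^n} x^\top A x + 2b^\top x + c$ s.t. $\|x\|^2 = 1$, namely $\min_{X} \langle C, X\rangle$ s.t. $\mathrm{trace}(X_{1:n,1:n}) = 1$, $X_{n+1,n+1} = 1$, $X \succeq 0$ (symmetric $X$ of size $n+1$), where $X = YY^\top$. Here $\langle U, V\rangle = \mathrm{trace}(U^\top V)$ and $\|\cdot\|$ is the Frobenius norm (2-norm for vectors). The feasible set $\mathcal{M} = \{Y : \|Y_1\|^2 = 1, \|y_2\|^2 = 1\}$ is a smooth submanifold of $\mathbb{R}^{(n+1)\times p}$, and with cost $g(Y) = \langle CY, Y\rangle$, a point $Y \in \mathcal{M}$ is second-order critical if its Riemannian gradient vanishes and its Riemannian Hessian is positive semidefinite on the tangent space. Globally optimal points $Y$ map to globally optimal $X = YY^\top$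 of the SDP. *)

From HB Require Import structures.
From mathcomp Require Import all_boot all_order all_algebra.
From mathcomp Require Import reals.
Set Implicit Arguments. Unset Strict Implicit. Unset Printing Implicit Defensive.
Import Order.TTheory GRing.Theory Num.Theory.
Local Open Scope ring_scope.

Section TRS.
Variables (R : realType) (n p : nat).

Definition frob {m k : nat} (U V : 'M[R]_(m, k)) : R := \tr (U^T *m V).

Definition Cmat (A : 'M[R]_n) (b : 'cV[R]_n) (c : R) : 'M[R]_(n + 1) :=
  block_mx A b b^T c%:M.

Definition Yblk1 (Y : 'M[R]_(n + 1, p)) : 'M[R]_(n, p) := usubmx Y.
Definition Yblk2 (Y : 'M[R]_(n + 1, p)) : 'M[R]_(1, p) := dsubmx Y.

Definition onM (Y : 'M[R]_(n + 1, p)) : Prop :=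
  frob (Yblk1 Y) (Yblk1 Y) = 1 /\ frob (Yblk2 Y) (Yblk2 Y) = 1.

Definition cost (C : 'M[R]_(n + 1)) (Y : 'M[R]_(n + 1, p)) : R := frob (C *m Y) Y.

(* Euclidean gradient and Hessian of g (C symmetric): 2 C Y and V |-> 2 C V. *)
Definition egrad (C : 'M[R]_(n + 1)) (Y : 'M[R]_(n + 1, p)) : 'M[R]_(n + 1, p) :=
  2%:R *: (C *m Y).
Definition ehess (C : 'M[R]_(n + 1)) (V : 'M[R]_(n + 1, p)) : 'M[R]_(n + 1, p) :=
  2%:R *: (C *m V).

Definition tangent (Y V : 'M[R]_(n + 1, p)) : Prop :=
  frob (Yblk1 Y) (Yblk1 V) = 0 /\ frob (Yblk2 Y) (Yblk2 V) = 0.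

Definition projT (Y Z : 'M[R]_(n + 1, p)) : 'M[R]_(n + 1, p) :=
  col_mx (Yblk1 Z - frob (Yblk1 Y) (Yblk1 Z) *: Yblk1 Y)
         (Yblk2 Z - frob (Yblk2 Y) (Yblk2 Z) *: Yblk2 Y).

Definition rgrad (C : 'M[R]_(n + 1)) (Y : 'M[R]_(n + 1, p)) : 'M[R]_(n + 1, p) :=
  projT Y (egrad C Y).

(* This equals Proj_Y (D rgrad(Y)[V]), the standard formula for submanifolds. *)
Definition rhess (C : 'M[R]_(n + 1)) (Y V : 'M[R]_(n + 1, p)) : 'M[R]_(n + 1, p) :=
  projT Y (ehess C V)
  - col_mx (frob (Yblk1 Y) (Yblk1 (egrad C Y)) *: Yblk1 V)
           (frob (Yblk2 Y) (Yblk2 (egrad C Y)) *: Yblk2 V).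

Definition second_order_critical (C : 'M[R]_(n + 1)) (Y : 'M[R]_(n + 1, p)) : Prop :=
  onM Y /\ rgrad C Y = 0 /\
  (forall V : 'M[R]_(n + 1, p), tangent Y V -> 0 <= frob V (rhess C Y V)).

Definition globally_optimal (C : 'M[R]_(n + 1)) (Y : 'M[R]_(n + 1, p)) : Prop :=
  onM Y /\ (forall Z : 'M[R]_(n + 1, p), onM Z -> cost C Y <= cost C Z).

End TRS.

(* Write mu, nu for the multipliers of the first-order condition and
   S = 2C - diag(mu I_n, nu), so that S Y = 0.  Given x, pick a nonzero row u
   orthogonal to Y1^T x1 - y2^T x2 (possible as p >= 2): then both tangency
   conditions for V = x u - t Y reduce to the same scalar equation, solved by t.
   At such V the Hessian form equals (x^T S x) |u|^2, so second-order
   criticality makes S positive semidefinite, and on the feasible set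
   2 g(Z) = mu + nu + <Z, S Z> >= mu + nu = 2 g(Y). *)

From HB Require Import structures.
From mathcomp Require Import all_boot all_order all_algebra.
From mathcomp Require Import reals.
Import Order.TTheory GRing.Theory Num.Theory.

Set Implicit Arguments.
Unset Strict Implicit.
Unset Printing Implicit Defensive.
Local Open Scope ring_scope.

Section Frobenius.
Variable R : realType.

Lemma frobC m k (U V : 'M[R]_(m, k)) : frob U V = frob V U.
Proof. by rewrite /frob -mxtrace_tr trmx_mul trmxK. Qed.

Lemma frobDr m k (U V W : 'M[R]_(m, k)) : frob U (V + W) = frob U V + frob U W.
Proof. by rewrite /frob mulmxDr mxtraceD. Qed.

Lemma frobZr m k (U V : 'M[R]_(m, k)) a : frob U (a *: V) = a * frob U V.
Proof. by rewrite /frob -scalemxAr mxtraceZ. Qed.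

Lemma frobBr m k (U V W : 'M[R]_(m, k)) : frob U (V - W) = frob U V - frob U W.
Proof. by rewrite frobDr -scaleN1r frobZr mulN1r. Qed.

Lemma frob0r m k (U : 'M[R]_(m, k)) : frob U 0 = 0.
Proof. by rewrite /frob mulmx0 mxtrace0. Qed.

Lemma frob_col m1 m2 k (U1 V1 : 'M[R]_(m1, k)) (U2 V2 : 'M[R]_(m2, k)) :
  frob (col_mx U1 U2) (col_mx V1 V2) = frob U1 V1 + frob U2 V2.
Proof. by rewrite /frob tr_col_mx mul_row_col mxtraceD. Qed.

Lemma frob_split m1 m2 k (U V : 'M[R]_(m1 + m2, k)) :
  frob U V = frob (usubmx U) (usubmx V) + frob (dsubmx U) (dsubmx V).
Proof. by rewrite -frob_col !vsubmxK. Qed.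

Lemma frob_sumsq m k (U : 'M[R]_(m, k)) : frob U U = \sum_j \sum_i U i j ^+ 2.
Proof.
rewrite /frob /mxtrace; apply: eq_bigr => j _; rewrite mxE.
by apply: eq_bigr => i _; rewrite mxE expr2.
Qed.

Lemma frob_gt0 m k (U : 'M[R]_(m, k)) : U != 0 -> 0 < frob U U.
Proof.
have sq_ge0 j : 0 <= \sum_i U i j ^+ 2 by apply: sumr_ge0 => i _; apply: sqr_ge0.
apply: contraNT; rewrite -leNgt frob_sumsq => Ule0.
have U_eq0 : \sum_j \sum_i U i j ^+ 2 = 0.
  by apply/eqP; rewrite eq_le Ule0 sumr_ge0.
apply/eqP/matrixP => i j; rewrite mxE; apply/eqP; rewrite -sqrf_eq0; apply/eqP.
have := psumr_eq0P (fun j _ => sq_ge0 j) U_eq0 (i := j) isT.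
by move=> /(psumr_eq0P (fun i _ => sqr_ge0 (U i j)))/(_ i isT).
Qed.

Lemma frob_mul_rank1 m k (Y : 'M[R]_(m, k)) (x : 'cV[R]_m) (u : 'rV[R]_k) :
  frob Y (x *m u) = \tr (u *m (Y^T *m x)).
Proof. by rewrite /frob mulmxA mxtrace_mulC. Qed.

Lemma frob_psd_ge0 m k (S : 'M[R]_m) (Z : 'M[R]_(m, k)) :
  (forall x : 'cV[R]_m, 0 <= (x^T *m S *m x) 0 0) -> 0 <= frob Z (S *m Z).
Proof.
move=> S_psd; rewrite /frob /mxtrace; apply: sumr_ge0 => j _.
have := S_psd (col j Z); rewrite -mulmxA !mxE.
congr (_ <= _); apply: eq_bigr => i _; rewrite !mxE; congr (_ * _).
by apply: eq_bigr => l _; rewrite !mxE.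
Qed.

Lemma frob_quad_rank1 m k (S : 'M[R]_m) (Y : 'M[R]_(m, k))
    (x : 'cV[R]_m) (u : 'rV[R]_k) (t : R) :
  S^T = S -> S *m Y = 0 ->
  frob (x *m u - t *: Y) (S *m (x *m u - t *: Y)) = (x^T *m S *m x) 0 0 * frob u u.
Proof.
move=> S_sym SY0.
have -> : S *m (x *m u - t *: Y) = S *m x *m u.
  by rewrite mulmxBr -scalemxAr SY0 scaler0 subr0 mulmxA.
rewrite frobC frobBr frobZr [frob _ Y]frobC [frob Y _]frob_mul_rank1.
have -> : Y^T *m (S *m x) = 0 by rewrite mulmxA -S_sym -trmx_mul SY0 trmx0 mul0mx.
rewrite mulmx0 mxtrace0 mulr0 subr0 /frob !trmx_mul S_sym -!mulmxA.
rewrite (mulmxA S x u) (mulmxA x^T (S *m x) u) (mulmxA x^T S x).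
by rewrite {1}[x^T *m S *m x]mx11_scalar mul_scalar_mx -scalemxAr mxtraceZ.
Qed.

End Frobenius.

Lemma cV_left_kernel_neq0 (K : fieldType) p (w : 'cV[K]_p) :
  (2 <= p)%N -> exists2 u : 'rV[K]_p, u != 0 & u *m w = 0.
Proof.
move=> p_ge2; have : kermx w != 0.
  rewrite -mxrank_eq0 mxrank_ker subn_eq0 -ltnNge.
  by apply: leq_trans p_ge2; rewrite ltnS rank_leq_col.
case: (pickP (fun i => row i (kermx w) != 0)) => [i ker_i_neq0 | ker_rows0].
  by exists (row i (kermx w)); rewrite // -row_mul mulmx_ker row0.
suff -> : kermx w = 0 by rewrite eqxx.
by apply/row_matrixP => i; rewrite row0; apply/eqP/negbFE/ker_rows0.
Qed.

Section DualCertificate.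
Variables (R : realType) (n p : nat).
Implicit Types (C : 'M[R]_(n + 1)) (Y Z V : 'M[R]_(n + 1, p)).

Definition lagrange_mx (mu nu : R) : 'M[R]_(n + 1) := block_mx mu%:M 0 0 nu%:M.

Lemma mul_lagrange_mx mu nu k (Z : 'M[R]_(n + 1, k)) :
  lagrange_mx mu nu *m Z = col_mx (mu *: usubmx Z) (nu *: dsubmx Z).
Proof.
by rewrite -{1}(vsubmxK Z) mul_block_col !mul0mx !mul_scalar_mx addr0 add0r.
Qed.

Lemma tr_lagrange_mx mu nu : (lagrange_mx mu nu)^T = lagrange_mx mu nu.
Proof. by rewrite /lagrange_mx tr_block_mx !tr_scalar_mx !trmx0. Qed.

Lemma frob_lagrange_mx mu nu Z : onM Z -> frob Z (lagrange_mx mu nu *m Z) = mu + nu.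
Proof.
case=> Z1 Z2; rewrite mul_lagrange_mx frob_split col_mxKu col_mxKd !frobZr.
by rewrite -[usubmx Z]/(Yblk1 Z) -[dsubmx Z]/(Yblk2 Z) Z1 Z2 !mulr1.
Qed.

Definition multiplier1 C Y : R := frob (Yblk1 Y) (Yblk1 (egrad C Y)).
Definition multiplier2 C Y : R := frob (Yblk2 Y) (Yblk2 (egrad C Y)).

Definition dual_certificate C Y : 'M[R]_(n + 1) :=
  2%:R *: C - lagrange_mx (multiplier1 C Y) (multiplier2 C Y).

Lemma dual_certificate_sym C Y :
  C^T = C -> (dual_certificate C Y)^T = dual_certificate C Y.
Proof.
by move=> C_sym; rewrite /dual_certificate linearB linearZ /= C_sym tr_lagrange_mx.
Qed.

Lemma rgrad_eq0_mul_dual_certificate C Y :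
  rgrad C Y = 0 -> dual_certificate C Y *m Y = 0.
Proof.
move/eqP; rewrite /rgrad /projT col_mx_eq0 !subr_eq0 => /andP[/eqP G1 /eqP G2].
rewrite /dual_certificate mulmxBl mul_lagrange_mx -scalemxAl -/(egrad C Y).
by rewrite -[usubmx Y]/(Yblk1 Y) -[dsubmx Y]/(Yblk2 Y) -G1 -G2 vsubmxK subrr.
Qed.

Lemma frob_projT_tangent Y V Z : tangent Y V -> frob V (projT Y Z) = frob V Z.
Proof.
case=> V1 V2; rewrite /projT [RHS]frob_split frob_split col_mxKu col_mxKd.
rewrite !frobBr !frobZr (frobC (usubmx V) (Yblk1 Y)) (frobC (dsubmx V) (Yblk2 Y)).
by rewrite V1 V2 !mulr0 !subr0.
Qed.

Lemma frob_rhess C Y V :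
  tangent Y V -> frob V (rhess C Y V) = frob V (dual_certificate C Y *m V).
Proof.
move=> tV; rewrite /rhess frobBr frob_projT_tangent //.
by rewrite /dual_certificate mulmxBl mul_lagrange_mx -scalemxAl frobBr.
Qed.

Lemma cost_dual_certificate C Y Z : onM Z ->
  2%:R * cost C Z =
    multiplier1 C Y + multiplier2 C Y + frob Z (dual_certificate C Y *m Z).
Proof.
move=> onMZ; rewrite -(frob_lagrange_mx (multiplier1 C Y) (multiplier2 C Y) onMZ).
by rewrite -frobDr -mulmxDl addrC subrK /cost frobC -frobZr scalemxAl.
Qed.

Lemma tangent_rank1_direction Y (x : 'cV[R]_(n + 1)) : (2 <= p)%N -> onM Y ->
  exists2 u : 'rV[R]_p, u != 0 & exists t, tangent Y (x *m u - t *: Y).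
Proof.
move=> p_ge2 [Y1 Y2].
have [u u_neq0 u_ker] :=
  cV_left_kernel_neq0 ((Yblk1 Y)^T *m usubmx x - (Yblk2 Y)^T *m dsubmx x) p_ge2.
have t_eq : frob (Yblk1 Y) (usubmx x *m u) = frob (Yblk2 Y) (dsubmx x *m u).
  apply/eqP; rewrite -subr_eq0 !frob_mul_rank1 -linearB /=.
  by rewrite -mulmxBr u_ker mxtrace0.
exists u => //; exists (frob (Yblk1 Y) (usubmx x *m u)).
split; rewrite /tangent /Yblk1 /Yblk2 linearB linearZ /= frobBr frobZr.
  by rewrite -[usubmx Y]/(Yblk1 Y) Y1 mulr1 mul_usub_mx subrr.
by rewrite -[dsubmx Y]/(Yblk2 Y) Y2 mulr1 -[usubmx Y]/(Yblk1 Y) t_eq mul_dsub_mx subrr.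
Qed.

Lemma dual_certificate_psd C Y :
  (2 <= p)%N -> C^T = C -> second_order_critical C Y ->
  forall x : 'cV[R]_(n + 1), 0 <= (x^T *m dual_certificate C Y *m x) 0 0.
Proof.
move=> p_ge2 C_sym [onMY [grad0 hess_ge0]] x.
have [u u_neq0 [t tV]] := tangent_rank1_direction x p_ge2 onMY.
have S_sym := dual_certificate_sym Y C_sym.
have SY0 := rgrad_eq0_mul_dual_certificate grad0.
rewrite -(pmulr_lge0 _ (frob_gt0 u_neq0)) -(frob_quad_rank1 _ _ t S_sym SY0).
by rewrite -frob_rhess //; apply: hess_ge0.
Qed.

Theorem second_order_critical_globally_optimal C Y : (2 <= p)%N -> C^T = C ->
  second_order_critical C Y -> globally_optimal C Y.
Proof.
move=> p_ge2 C_sym Ycrit; have S_psd := dual_certificate_psd p_ge2 C_sym Ycrit.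
case: Ycrit => onMY [grad0 _]; split=> // Z onMZ.
rewrite -(@ler_pM2l _ 2%:R) ?ltr0n // !(cost_dual_certificate _ Y) //.
by rewrite rgrad_eq0_mul_dual_certificate // frob0r addr0 lerDl; apply: frob_psd_ge0.
Qed.

End DualCertificate.

Lemma Cmat_sym (R : realType) n (A : 'M[R]_n) b c :
  A^T = A -> (Cmat A b c)^T = Cmat A b c.
Proof. by move=> A_sym; rewrite /Cmat tr_block_mx trmxK tr_scalar_mx A_sym. Qed.

Theorem corollary5 (R : realType) (n p : nat) (A : 'M[R]_n) (b : 'cV[R]_n) (c : R) :
  (2 <= n)%N -> (2 <= p)%N -> A^T = A ->
  forall Y : 'M[R]_(n + 1, p),
    second_order_critical (Cmat A b c) Y -> globally_optimal (Cmat A b c) Y.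
Proof.
move=> _ p_ge2 A_sym Y.
exact: second_order_critical_globally_optimal p_ge2 (Cmat_sym b c A_sym).
Qed.
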